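(* Let $r\ge1$ be an integer and $g\in C^\infty[a,b]$ with $g(a)=0$, $g^{(j)}(a)=0$ for $j=1,\dots,r$, and $g^{(r+1)}(x)\ne0$ for all $x\in[a,b]$. For integers $k\ge0$ define $\widehat\varphi_k(x)=g'(x)g(x)^{\frac{k-r}{r+1}}$ if $g^{(r+1)}>0$ on $[a,b]$, and $\widehat\varphi_k(x)=g'(x)(-g(x))^{\frac{k-r}{r+1}}$ if $g^{(r+1)}<0$ on $[a,b]$ (with values at $x=a$ by continuous extension). For $n\ge1$, the space $\widehat{\mathcal{E}}=\{v=\sum_{k=0}^{n-1}c_k\widehat\varphi_k:c_k\in\mathbb{R}\}$ is an extended Chebyshev space on $[a,b]$.
   Context: An extended Chebyshev space on $[a,b]$ is an $n$-dimensional linear space of sufficiently smooth functions on $[a,b]$ in which every nonzero element has at most $n-1$ zeros in $[a,b]$ counted with multiplicity (equivalently, every Hermite interpolation problem with $n$ conditions at points of $[a,b]$ has a unique solution in the space). Real powers of positive numbers are the positive real ones. *)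

From Stdlib Require Import Reals List.
From Coquelicot Require Import Coquelicot.
Open Scope R_scope.

Definition has_deriv_on (a b : R) (f f' : R -> R) : Prop :=
  forall x, a <= x <= b ->
    filterlim (fun y => (f y - f x) / (y - x))
      (within (fun y => a <= y <= b /\ y <> x) (locally x))
      (locally (f' x)).

(* D is a full sequence of successive derivatives on [a,b]
   (D 0 is the function itself, D (j+1) = (D j)' on [a,b]);
   existence of such D for f means f is C^infinity on [a,b]. *)
Definition deriv_seq_on (a b : R) (D : nat -> R -> R) : Prop :=
  forall j, has_deriv_on a b (D j) (D (S j)).

Fixpoint lsum (n : nat) (F : nat -> R) : R :=
  match n with
  | O => 0
  | S m => lsum m F + F m
  end.

(* Since g vanishes at a to order exactly r+1 and g^(r+1) has a constant sign s, iterating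
   Hadamard's lemma (with integral remainders) gives s g = (x - a)^(r+1) h with h smooth and
   positive, so u = (x - a) h^(1/(r+1)) is smooth, u' > 0 and s g = u^(r+1).  Then
   phi_k = s (r+1) u' u^k, so the elements of the span are w p(u) with w = s (r+1) u' nowhere zero
   and p a polynomial of degree < n.  Comparing orders of vanishing, a zero of w p(u) of
   multiplicity m at x0 is a root of p of multiplicity at least m at u(x0); as u is injective,
   these multiplicities add up to at most deg p <= n - 1. *)

From Stdlib Require Import Reals List Lra Lia Psatz ClassicalEpsilon.
From Coquelicot Require Import Coquelicot.
From mathcomp Require ssreflect ssrbool eqtype ssrnat seq fintype bigop ssralg poly polydiv.
From mathcomp.reals_stdlib Require Rstruct.
Open Scope R_scope.

Notation at_in a b x := (within (fun y => a <= y <= b /\ y <> x) (locally x)).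

Definition continuous_in (a b : R) (f : R -> R) :=
  forall x, a <= x <= b -> filterlim f (at_in a b x) (locally (f x)).

Section LimitAlgebra.
Context {T : Type} {F : (T -> Prop) -> Prop} {FF : Filter F}.

Lemma lim_plus (f g : T -> R) l m :
  filterlim f F (locally l) -> filterlim g F (locally m) ->
  filterlim (fun y => f y + g y) F (locally (l + m)).
Proof. intros Hf Hg; exact (filterlim_comp_2 _ _ _ Hf Hg (filterlim_plus l m)). Qed.

Lemma lim_mult (f g : T -> R) l m :
  filterlim f F (locally l) -> filterlim g F (locally m) ->
  filterlim (fun y => f y * g y) F (locally (l * m)).
Proof. intros Hf Hg; exact (filterlim_comp_2 _ _ _ Hf Hg (filterlim_mult l m)). Qed.

Lemma lim_scal c (f : T -> R) l :
  filterlim f F (locally l) -> filterlim (fun y => c * f y) F (locally (c * l)).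
Proof. intros; apply lim_mult; [apply filterlim_const | assumption]. Qed.

End LimitAlgebra.

Section WithinInterval.
Variables a b : R.

Lemma lim_in_eps f x l :
  filterlim f (at_in a b x) (locally l) <->
  forall eps, 0 < eps -> exists d, 0 < d /\
    forall y, a <= y <= b -> y <> x -> Rabs (y - x) < d -> Rabs (f y - l) < eps.
Proof.
split.
- intros H eps Heps.
  apply filterlim_locally with (eps := mkposreal eps Heps) in H.
  destruct H as [d Hd]; exists d; split; [apply cond_pos|].
  intros y Hy Hyx Hd'; apply (Hd y); [exact Hd' | auto].
- intros H; apply filterlim_locally; intros eps.
  destruct (H eps (cond_pos eps)) as [d [Hd Hd']].
  exists (mkposreal d Hd); intros y Hy [Hy1 Hy2]; apply Hd'; auto.
Qed.

Lemma lim_in_id x : filterlim (fun y => y) (at_in a b x) (locally x).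
Proof.
apply (filterlim_filter_le_1 (F := locally x)); [apply filter_le_within | apply filterlim_id].
Qed.

Lemma at_in_ex x (P : R -> Prop) : a < b -> a <= x <= b -> at_in a b x P ->
  exists y, (a <= y <= b /\ y <> x) /\ P y.
Proof.
intros Hab Hx [[d Hd] H].
set (t := Rmin d (b - a) / 2).
assert (Ht : 0 < t < d /\ t <= (b - a) / 2).
{ assert (0 < Rmin d (b - a)) by (apply Rmin_pos; lra).
  pose proof (Rmin_l d (b - a)); pose proof (Rmin_r d (b - a)); unfold t; lra. }
destruct (Rle_dec (x + t) b); [exists (x + t) | exists (x - t)];
  split; try (split; lra); apply H; try (split; lra);
  unfold ball; simpl; unfold AbsRing_ball, abs, minus, plus, opp; simpl.
- rewrite Rabs_right; lra.
- rewrite Rabs_left; lra.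
Qed.

Lemma at_in_proper x : a < b -> a <= x <= b -> ProperFilter' (at_in a b x).
Proof.
intros Hab Hx; constructor; [|apply within_filter, locally_filter].
intros HF; destruct (at_in_ex x _ Hab Hx HF) as [_ [_ []]].
Qed.

Lemma lim_in_unique (f : R -> R) x (l l' : R) : a < b -> a <= x <= b ->
  filterlim f (at_in a b x) (locally l) -> filterlim f (at_in a b x) (locally l') -> l = l'.
Proof.
intros Hab Hx; exact (filterlim_locally_unique (K := R_AbsRing) (V := R_NormedModule)
  (FF := at_in_proper x Hab Hx) f l l').
Qed.

Lemma lim_at_in_near f x l e : 0 < e -> filterlim f (at_in a b x) (locally l) ->
  at_in a b x (fun y => Rabs (f y - l) < e).
Proof.
intros He Hf; apply filterlim_locally with (eps := mkposreal e He) in Hf.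
apply (filter_imp _ _ (fun y Hy => Hy) Hf).
Qed.

Lemma lim_in_comp x (Q u : R -> R) : filterlim u (at_in a b x) (locally (u x)) ->
  continuity_pt Q (u x) -> filterlim (fun y => Q (u y)) (at_in a b x) (locally (Q (u x))).
Proof. intros Hu HQ; eapply filterlim_comp; [exact Hu | apply continuity_pt_filterlim, HQ]. Qed.

Lemma has_deriv_on_ext f f' g g' :
  (forall y, a <= y <= b -> f y = g y) -> (forall y, a <= y <= b -> f' y = g' y) ->
  has_deriv_on a b f f' -> has_deriv_on a b g g'.
Proof.
intros E E' H x Hx; rewrite <- E' by exact Hx.
apply (filterlim_within_ext _ (fun y => (f y - f x) / (y - x))); [|exact (H x Hx)].
intros y [Hy _]; rewrite !E; auto.
Qed.

Lemma has_deriv_on_continuous_in f f' : has_deriv_on a b f f' -> continuous_in a b f.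
Proof.
intros H x Hx.
assert (L : filterlim (fun y => (f y - f x) / (y - x) * (y - x) + f x) (at_in a b x)
              (locally (f' x * (x - x) + f x))).
{ apply lim_plus; [apply lim_mult; [exact (H x Hx)|] | apply filterlim_const].
  apply lim_plus; [apply lim_in_id | apply filterlim_const]. }
replace (f' x * (x - x) + f x) with (f x) in L by ring.
refine (filterlim_within_ext _ _ _ _ L).
intros y [_ Hyx]; field; lra.
Qed.

Lemma has_deriv_on_const c : has_deriv_on a b (fun _ => c) (fun _ => 0).
Proof.
intros x Hx; apply (filterlim_within_ext _ (fun _ => 0)); [|apply filterlim_const].
intros y [_ Hyx]; field; lra.
Qed.

Lemma has_deriv_on_id : has_deriv_on a b (fun y => y) (fun _ => 1).
Proof.
intros x Hx; apply (filterlim_within_ext _ (fun _ => 1)); [|apply filterlim_const].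
intros y [_ Hyx]; field; lra.
Qed.

Lemma has_deriv_on_plus f f' g g' : has_deriv_on a b f f' -> has_deriv_on a b g g' ->
  has_deriv_on a b (fun y => f y + g y) (fun y => f' y + g' y).
Proof.
intros Hf Hg x Hx.
apply (filterlim_within_ext _ (fun y => (f y - f x) / (y - x) + (g y - g x) / (y - x))).
- intros y [_ Hyx]; field; lra.
- apply lim_plus; auto.
Qed.

Lemma has_deriv_on_mult f f' g g' : has_deriv_on a b f f' -> has_deriv_on a b g g' ->
  has_deriv_on a b (fun y => f y * g y) (fun y => f' y * g y + f y * g' y).
Proof.
intros Hf Hg x Hx.
replace (f' x * g x + f x * g' x) with (g x * f' x + f x * g' x) by ring.
apply (filterlim_within_ext _
  (fun y => g x * ((f y - f x) / (y - x)) + f y * ((g y - g x) / (y - x)))).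
- intros y [_ Hyx]; field; lra.
- apply lim_plus; [apply lim_scal; auto | apply lim_mult; auto].
  apply (has_deriv_on_continuous_in f f'); auto.
Qed.

Lemma has_deriv_on_scal c f f' : has_deriv_on a b f f' ->
  has_deriv_on a b (fun y => c * f y) (fun y => c * f' y).
Proof.
intros Hf; eapply has_deriv_on_ext; [| | apply (has_deriv_on_mult _ _ _ _ (has_deriv_on_const c) Hf)];
  intros; simpl; ring.
Qed.

Lemma has_deriv_on_opp f f' : has_deriv_on a b f f' ->
  has_deriv_on a b (fun y => - f y) (fun y => - f' y).
Proof.
intros Hf; eapply has_deriv_on_ext; [| | apply (has_deriv_on_scal (-1) _ _ Hf)]; intros; simpl; ring.
Qed.

Lemma has_deriv_on_minus f f' g g' : has_deriv_on a b f f' -> has_deriv_on a b g g' ->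
  has_deriv_on a b (fun y => f y - g y) (fun y => f' y - g' y).
Proof. intros; apply has_deriv_on_plus, has_deriv_on_opp; auto. Qed.

Lemma has_deriv_on_comp (h h' f f' : R -> R) :
  (forall x, a <= x <= b -> derivable_pt_lim h (f x) (h' (f x))) -> has_deriv_on a b f f' ->
  has_deriv_on a b (fun y => h (f y)) (fun y => h' (f y) * f' y).
Proof.
intros Hh Hf x Hx.
set (slope := fun z => if Req_EM_T z (f x) then h' (f x) else (h z - h (f x)) / (z - f x)).
apply (filterlim_within_ext _ (fun y => slope (f y) * ((f y - f x) / (y - x)))).
- intros y [_ Hyx]; unfold slope; destruct (Req_EM_T (f y) (f x)) as [E|E].
  + rewrite E; unfold Rdiv; rewrite !Rminus_eq_0; ring.
  + field; split; lra.
- apply lim_mult; [|exact (Hf x Hx)].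
  apply lim_in_eps; intros e He.
  destruct (Hh x Hx e He) as [d1 Hd1].
  destruct (proj1 (lim_in_eps f x (f x)) (has_deriv_on_continuous_in f f' Hf x Hx) d1 (cond_pos d1))
    as [d2 [Hd2 H2]].
  exists d2; split; auto; intros y Hy Hyx Hyd.
  unfold slope; destruct (Req_EM_T (f y) (f x)) as [E|E].
  + rewrite Rminus_eq_0, Rabs_R0; lra.
  + specialize (Hd1 (f y - f x) ltac:(lra) (H2 y Hy Hyx Hyd)).
    replace (f x + (f y - f x)) with (f y) in Hd1 by ring; exact Hd1.
Qed.

Lemma has_deriv_on_pow f f' k : has_deriv_on a b f f' ->
  has_deriv_on a b (fun y => f y ^ k) (fun y => INR k * f y ^ pred k * f' y).
Proof.
intros; apply (has_deriv_on_comp (fun z => z ^ k) (fun z => INR k * z ^ pred k)); auto.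
intros; apply derivable_pt_lim_pow.
Qed.

Lemma has_deriv_on_Rpower f f' e : (forall x, a <= x <= b -> 0 < f x) -> has_deriv_on a b f f' ->
  has_deriv_on a b (fun y => Rpower (f y) e) (fun y => e * Rpower (f y) (e - 1) * f' y).
Proof.
intros; apply (has_deriv_on_comp (fun z => Rpower z e) (fun z => e * Rpower z (e - 1))); auto.
intros; apply derivable_pt_lim_power; auto.
Qed.

Lemma has_deriv_on_unique f f1 f2 x : a < b -> a <= x <= b ->
  has_deriv_on a b f f1 -> has_deriv_on a b f f2 -> f1 x = f2 x.
Proof. intros Hab Hx H1 H2; exact (lim_in_unique _ x _ _ Hab Hx (H1 x Hx) (H2 x Hx)). Qed.

Lemma deriv_seq_on_zero D : a < b -> deriv_seq_on a b D -> (forall x, a <= x <= b -> D 0%nat x = 0) ->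
  forall j x, a <= x <= b -> D j x = 0.
Proof.
intros Hab HD H0 j; induction j as [|j IH]; intros x Hx; auto.
apply (has_deriv_on_unique (D j) _ (fun _ => 0) x Hab Hx (HD j)).
apply (has_deriv_on_ext (fun _ => 0) (fun _ => 0)); [intros; symmetry; auto | reflexivity |].
apply has_deriv_on_const.
Qed.

End WithinInterval.

(* Extends a function given on [a,b] by constants, so that results about two-sided limits
   (MVT, IVT, Heine, Riemann integrals) apply to it. *)
Definition clamp (a b y : R) := Rmax a (Rmin b y).

Section MeanValue.
Variables a b : R.

Lemma clamp_in y : a <= b -> a <= clamp a b y <= b.
Proof. intros; unfold clamp, Rmax, Rmin; repeat destruct Rle_dec; lra. Qed.

Lemma clamp_id y : a <= y <= b -> clamp a b y = y.
Proof. intros; unfold clamp, Rmax, Rmin; repeat destruct Rle_dec; lra. Qed.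

Lemma clamp_lipschitz y z : a <= b -> Rabs (clamp a b y - clamp a b z) <= Rabs (y - z).
Proof.
intros; unfold clamp, Rmax, Rmin; repeat destruct Rle_dec; unfold Rabs; repeat destruct Rcase_abs; lra.
Qed.

Lemma continuous_clamp f : a <= b -> continuous_in a b f ->
  forall y, continuous (fun z => f (clamp a b z)) y.
Proof.
intros Hab Hf y; apply continuity_pt_filterlim; intros e He.
destruct (proj1 (lim_in_eps a b f _ _) (Hf (clamp a b y) (clamp_in y Hab)) e He) as [d [Hd H]].
exists d; split; auto; intros z [_ Hz]; simpl in *; unfold R_dist in *.
destruct (Req_dec (clamp a b z) (clamp a b y)) as [E|E].
- rewrite E, Rminus_eq_0, Rabs_R0; auto.
- apply H; auto; [apply clamp_in; auto | eapply Rle_lt_trans; [apply clamp_lipschitz|]; auto].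
Qed.

Lemma has_deriv_on_interior f f' x : has_deriv_on a b f f' -> a < x < b ->
  derivable_pt_lim f x (f' x).
Proof.
intros H Hx e He.
destruct (proj1 (lim_in_eps a b _ _ _) (H x ltac:(lra)) e He) as [d [Hd H']].
assert (Hd2 : 0 < Rmin d (Rmin (x - a) (b - x))) by (repeat apply Rmin_pos; lra).
exists (mkposreal _ Hd2); intros h Hh Hhd; simpl in Hhd.
pose proof (Rmin_l d (Rmin (x - a) (b - x))); pose proof (Rmin_r d (Rmin (x - a) (b - x))).
pose proof (Rmin_l (x - a) (b - x)); pose proof (Rmin_r (x - a) (b - x)).
assert (Hh' : - (x - a) < h < b - x) by (apply Rabs_def2 in Hhd; lra).
specialize (H' (x + h) ltac:(lra) ltac:(lra)).
replace (x + h - x) with h in H' by ring; apply H'; lra.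
Qed.

Lemma has_deriv_on_of_derivable f f' :
  (forall x, a <= x <= b -> derivable_pt_lim f x (f' x)) -> has_deriv_on a b f f'.
Proof.
intros H x Hx; apply lim_in_eps; intros e He.
destruct (H x Hx e He) as [d Hd]; exists d; split; [apply cond_pos|].
intros y Hy Hyx Hyd; specialize (Hd (y - x) ltac:(lra) Hyd).
replace (x + (y - x)) with y in Hd by ring; exact Hd.
Qed.

Lemma has_deriv_on_MVT f f' x y : has_deriv_on a b f f' -> a <= x -> x < y -> y <= b ->
  exists c, x < c < y /\ f y - f x = f' c * (y - x).
Proof.
intros Hf Hx Hxy Hy.
set (fc := fun z => f (clamp a b z)).
assert (Dfc : forall c, x < c < y -> derivable_pt_lim fc c (f' c)).
{ intros c Hc; apply is_derive_Reals.
  apply (is_derive_ext_loc f); [|apply is_derive_Reals, (has_deriv_on_interior f); auto; lra].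
  assert (Hr : 0 < Rmin (c - a) (b - c)) by (apply Rmin_pos; lra).
  exists (mkposreal _ Hr); intros t Ht; unfold fc; rewrite clamp_id; auto.
  unfold ball in Ht; simpl in Ht; unfold AbsRing_ball, abs, minus, plus, opp in Ht; simpl in Ht.
  pose proof (Rmin_l (c - a) (b - c)); pose proof (Rmin_r (c - a) (b - c)).
  apply Rabs_def2 in Ht; lra. }
set (pr1 := fun c (P : x < c < y) => exist (fun l => derivable_pt_abs fc c l) (f' c) (Dfc c P)).
set (pr2 := fun c (P : x < c < y) => derivable_pt_id c).
destruct (MVT fc id x y pr1 pr2 Hxy) as [c [P E]].
- intros c _; apply continuity_pt_filterlim, continuous_clamp; [lra|].
  apply (has_deriv_on_continuous_in a b f f'); auto.
- intros; apply derivable_continuous_pt, derivable_pt_id.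
- exists c; split; auto.
  unfold pr1, pr2, fc, id in E; rewrite derive_pt_id in E; simpl in E.
  rewrite !clamp_id in E; lra.
Qed.

Lemma has_deriv_on_MVT_near f f' x y : has_deriv_on a b f f' -> a <= x <= b -> a <= y <= b ->
  exists c, a <= c <= b /\ Rabs (c - y) <= Rabs (x - y) /\ f x - f y = f' c * (x - y).
Proof.
intros Hf Hx Hy; destruct (Rtotal_order x y) as [Hlt|[->|Hgt]].
- destruct (has_deriv_on_MVT f f' x y Hf ltac:(lra) Hlt ltac:(lra)) as [c [Hc E]].
  exists c; split; [lra | split; [rewrite !Rabs_left by lra; lra | lra]].
- exists y; split; [lra | split; [lra | ring]].
- destruct (has_deriv_on_MVT f f' y x Hf ltac:(lra) Hgt ltac:(lra)) as [c [Hc E]].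
  exists c; split; [lra | split; [rewrite !Rabs_right by lra; lra | lra]].
Qed.

Lemma has_deriv_on_pos_injective f f' : has_deriv_on a b f f' -> (forall x, a <= x <= b -> 0 < f' x) ->
  forall x y, a <= x <= b -> a <= y <= b -> f x = f y -> x = y.
Proof.
intros Hf Hp x y Hx Hy E.
destruct (has_deriv_on_MVT_near f f' x y Hf Hx Hy) as [c [Hc [_ Ec]]].
assert (0 < f' c) by (apply Hp, Hc); nra.
Qed.

Lemma has_deriv_on_pos_from_zero f f' : has_deriv_on a b f f' -> f a = 0 ->
  (forall x, a < x <= b -> 0 < f' x) -> forall x, a < x <= b -> 0 < f x.
Proof.
intros Hf Ha Hp x Hx.
destruct (has_deriv_on_MVT f f' a x Hf ltac:(lra) ltac:(lra) ltac:(lra)) as [c [Hc E]].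
assert (0 < f' c) by (apply Hp; lra); nra.
Qed.

Lemma continuous_in_sign F : a < b -> continuous_in a b F -> (forall x, a <= x <= b -> F x <> 0) ->
  (forall y, a <= y <= b -> 0 < F y) \/ (forall y, a <= y <= b -> F y < 0).
Proof.
intros Hab Hc Hnz.
assert (Hsame : forall y z, a <= y <= b -> a <= z <= b -> F y < 0 < F z -> False).
{ intros y z Hy Hz Hyz.
  set (Fc := fun t => F (clamp a b t)).
  assert (HFc : continuity Fc)
    by (intros t; apply continuity_pt_filterlim, continuous_clamp; auto; lra).
  destruct (IVT_gen Fc y z 0 HFc) as [x [Hx Ex]].
  { unfold Fc; rewrite !clamp_id by auto; unfold Rmin, Rmax; destruct Rle_dec; lra. }
  assert (Hxi : a <= x <= b) by (unfold Rmin, Rmax in Hx; destruct Rle_dec; lra).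
  unfold Fc in Ex; rewrite clamp_id in Ex by auto; exact (Hnz x Hxi Ex). }
destruct (Rlt_dec 0 (F a)) as [Ha|Ha]; [left|right]; intros y Hy;
  pose proof (Hnz y Hy); pose proof (Hnz a ltac:(lra));
  destruct (Rtotal_order (F y) 0) as [|[|]]; try lra.
- exfalso; apply (Hsame y a); auto; lra.
- exfalso; apply (Hsame a y); auto; lra.
Qed.

End MeanValue.

Definition smooth_on (a b : R) (f : R -> R) :=
  exists D, (forall x, a <= x <= b -> D 0%nat x = f x) /\ deriv_seq_on a b D.

Fixpoint sum_prod (l : list ((R -> R) * (R -> R))) (x : R) : R :=
  match l with nil => 0 | p :: l' => fst p x * snd p x + sum_prod l' x end.

Lemma sum_prod_app l l' x : sum_prod (l ++ l') x = sum_prod l x + sum_prod l' x.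
Proof. induction l as [|p l IH]; simpl; [ring | rewrite IH; ring]. Qed.

Section Smooth.
Variables a b : R.

Lemma smooth_on_coind (P : (R -> R) -> Prop) :
  (forall f, P f -> exists f', has_deriv_on a b f f' /\ P f') -> forall f, P f -> smooth_on a b f.
Proof.
intros HP f Hf.
set (step := fun s : {f | P f} =>
  let e := constructive_indefinite_description _ (HP (proj1_sig s) (proj2_sig s)) in
  exist P (proj1_sig e) (proj2 (proj2_sig e))).
exists (fun j => proj1_sig (Nat.iter j step (exist P f Hf))); split; [reflexivity|].
intros j; simpl; set (s := Nat.iter j step (exist P f Hf)); unfold step; simpl.
destruct (constructive_indefinite_description _ (HP (proj1_sig s) (proj2_sig s))) as [f' [H1 H2]].
exact H1.
Qed.

Lemma smooth_on_deriv f : smooth_on a b f -> exists f', has_deriv_on a b f f' /\ smooth_on a b f'.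
Proof.
intros [D [H0 HD]]; exists (D 1%nat); split.
- apply has_deriv_on_ext with (D 0%nat) (D 1%nat); auto.
- exists (fun j => D (S j)); split; auto; intros j; apply HD.
Qed.

Lemma smooth_on_ext f g : (forall x, a <= x <= b -> f x = g x) -> smooth_on a b f -> smooth_on a b g.
Proof. intros E [D [H0 HD]]; exists D; split; auto; intros; rewrite H0, E; auto. Qed.

Lemma smooth_on_const c : smooth_on a b (fun _ => c).
Proof.
exists (fun j _ => match j with O => c | _ => 0 end); split; auto.
intros [|j]; apply has_deriv_on_const.
Qed.

Lemma smooth_on_shift c : smooth_on a b (fun x => x - c).
Proof.
exists (fun j x => match j with O => x - c | 1%nat => 1 | _ => 0 end); split; auto.
intros [|[|j]]; try apply has_deriv_on_const.
apply (has_deriv_on_ext a b (fun x => x + - c) (fun _ => 1 + 0)); intros; try ring.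
apply has_deriv_on_plus; [apply has_deriv_on_id | apply has_deriv_on_const].
Qed.

Lemma smooth_on_sum_prod (S : (R -> R) -> Prop) :
  (forall f s, smooth_on a b f -> S s -> exists l,
     List.Forall (fun p => smooth_on a b (fst p) /\ S (snd p)) l /\
     has_deriv_on a b (fun x => f x * s x) (sum_prod l)) ->
  forall l, List.Forall (fun p => smooth_on a b (fst p) /\ S (snd p)) l -> smooth_on a b (sum_prod l).
Proof.
intros Hstep.
set (ok := List.Forall (fun p => smooth_on a b (fst p) /\ S (snd p))).
assert (Hder : forall l, ok l -> exists l', ok l' /\ has_deriv_on a b (sum_prod l) (sum_prod l')).
{ induction l as [|[f s] l IH]; intros Hl.
  - exists nil; split; [constructor | apply has_deriv_on_const].
  - inversion Hl as [|? ? [Hf Hs] Hl']; subst.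
    destruct (IH Hl') as [l' [Hok HD]]; destruct (Hstep f s Hf Hs) as [l0 [Hok0 HD0]].
    exists (l0 ++ l'); split; [apply List.Forall_app; auto|].
    eapply has_deriv_on_ext; [intros; reflexivity | | apply has_deriv_on_plus; [exact HD0 | exact HD]].
    intros; symmetry; apply sum_prod_app. }
intros l Hl.
apply (smooth_on_coind (fun h => exists l, ok l /\ forall x, a <= x <= b -> h x = sum_prod l x)).
- intros h [l0 [Hl0 E]]; destruct (Hder l0 Hl0) as [l' [Hl' D]].
  exists (sum_prod l'); split; [|exists l'; split; auto].
  eapply has_deriv_on_ext; [| |apply D]; intros; [symmetry|]; auto.
- exists l; split; auto.
Qed.

Lemma smooth_on_mult f g : smooth_on a b f -> smooth_on a b g -> smooth_on a b (fun x => f x * g x).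
Proof.
intros Hf Hg; apply smooth_on_ext with (sum_prod ((f, g) :: nil)); [intros; simpl; ring|].
apply (smooth_on_sum_prod (smooth_on a b)); [|repeat constructor; auto].
intros f0 s Hf0 Hs.
destruct (smooth_on_deriv f0 Hf0) as [f1 [Df Hf1]]; destruct (smooth_on_deriv s Hs) as [s1 [Ds Hs1]].
exists ((f1, s) :: (f0, s1) :: nil); split; [repeat constructor; auto|].
eapply has_deriv_on_ext; [intros; reflexivity | |apply has_deriv_on_mult; eauto]; intros; simpl; ring.
Qed.

Lemma smooth_on_scal c f : smooth_on a b f -> smooth_on a b (fun x => c * f x).
Proof. intros; apply smooth_on_mult; auto; apply smooth_on_const. Qed.

Lemma smooth_on_pow f k : smooth_on a b f -> smooth_on a b (fun x => f x ^ k).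
Proof.
intros Hf; induction k as [|k IH]; [apply (smooth_on_const 1) | apply smooth_on_mult; auto].
Qed.

Lemma smooth_on_Rpower h e : (forall x, a <= x <= b -> 0 < h x) -> smooth_on a b h ->
  smooth_on a b (fun x => Rpower (h x) e).
Proof.
intros Hpos Hh; destruct (smooth_on_deriv h Hh) as [h' [Dh Hh']].
apply smooth_on_ext with (sum_prod ((fun _ => 1, fun x => Rpower (h x) e) :: nil));
  [intros; simpl; ring|].
apply (smooth_on_sum_prod (fun s => exists e, s = fun x => Rpower (h x) e));
  [|repeat constructor; [apply smooth_on_const | exists e; auto]].
intros f s Hf [e' ->]; destruct (smooth_on_deriv f Hf) as [f1 [Df Hf1]].
exists ((f1, fun x => Rpower (h x) e') ::
        (fun x => e' * f x * h' x, fun x => Rpower (h x) (e' - 1)) :: nil); split.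
- repeat constructor; simpl; [exact Hf1 | exists e'; reflexivity | | exists (e' - 1); reflexivity].
  apply smooth_on_mult; [apply smooth_on_scal|]; auto.
- eapply has_deriv_on_ext;
    [intros; reflexivity | | apply has_deriv_on_mult; [apply Df | apply has_deriv_on_Rpower; eauto]].
  intros; simpl; ring.
Qed.

End Smooth.

(* The [j]-th derivative of the Hadamard quotient [(F x - F a) / (x - a)] is
   [segment_moment a b j F^(j+1)]. *)
Definition segment_moment (a b : R) (j : nat) (K : R -> R) (x : R) :=
  RInt (fun t => t ^ j * K (clamp a b (a + t * (x - a)))) 0 1.

Lemma ex_RInt_moment (Kc : R -> R) j u v : (forall y, continuous Kc y) ->
  ex_RInt (fun t => t ^ j * Kc (u + t * v)) 0 1.
Proof.
intros HK; apply (ex_RInt_continuous (V := R_CompleteNormedModule)); intros t _.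
apply (continuous_mult (fun t => t ^ j) (fun t => Kc (u + t * v))).
- apply (ex_derive_continuous (K := R_AbsRing) (V := R_NormedModule) (fun t : R => t ^ j)).
  auto_derive; auto.
- apply (continuous_comp (fun t => u + t * v) Kc); [|apply HK].
  apply (ex_derive_continuous (K := R_AbsRing) (V := R_NormedModule) (fun t : R => u + t * v)).
  auto_derive; auto.
Qed.

Lemma RInt_pow_mult j c : RInt (fun t => t ^ j * c) 0 1 = c / INR (S j).
Proof.
assert (HS : INR (S j) <> 0) by (apply not_0_INR; lia).
apply (is_RInt_unique (V := R_CompleteNormedModule)).
replace (c / INR (S j))
  with (minus ((fun t => c * t ^ S j / INR (S j)) 1) ((fun t => c * t ^ S j / INR (S j)) 0)).
- apply (is_RInt_derive (V := R_CompleteNormedModule) (fun t => c * t ^ S j / INR (S j))).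
  + intros x _; auto_derive; auto.
    change (match j with 0%nat => 1 | S _ => INR j + 1 end) with (INR (S j)); field; auto.
  + intros; apply (ex_derive_continuous (K := R_AbsRing) (V := R_NormedModule) (fun t : R => t ^ j * c)).
    auto_derive; auto.
- unfold minus, plus, opp; simpl; rewrite pow1; field; auto.
Qed.

Lemma ex_RInt_diff_quotient (f g k : R -> R) h u v : ex_RInt f u v -> ex_RInt g u v -> ex_RInt k u v ->
  ex_RInt (fun t => (f t - g t) / h - k t) u v.
Proof.
intros Hf Hg Hk.
apply (ex_RInt_minus (V := R_CompleteNormedModule)); [|exact Hk].
apply (ex_RInt_ext (fun t => scal (/ h) (minus (f t) (g t)))).
{ intros; unfold scal, minus, plus, opp; simpl; unfold mult, Rdiv; simpl; ring. }
apply (ex_RInt_scal (V := R_CompleteNormedModule)), (ex_RInt_minus (V := R_CompleteNormedModule)); auto.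
Qed.

Lemma RInt_diff_quotient (f g k : R -> R) h u v : h <> 0 ->
  ex_RInt f u v -> ex_RInt g u v -> ex_RInt k u v ->
  (RInt f u v - RInt g u v) / h - RInt k u v = RInt (fun t => (f t - g t) / h - k t) u v.
Proof.
intros Hh Hf Hg Hk.
rewrite (RInt_ext (fun t => (f t - g t) / h - k t) (fun t => minus (scal (/ h) (minus (f t) (g t))) (k t)))
  by (intros; unfold scal, minus, plus, opp; simpl; unfold mult; simpl; unfold Rdiv; ring).
assert (Hfg : ex_RInt (fun t => minus (f t) (g t)) u v)
  by exact (ex_RInt_minus (V := R_CompleteNormedModule) _ _ _ _ Hf Hg).
rewrite (RInt_minus (V := R_CompleteNormedModule)), (RInt_scal (V := R_CompleteNormedModule)),
  (RInt_minus (V := R_CompleteNormedModule)); auto.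
- generalize (RInt f u v) (RInt g u v) (RInt k u v); intros.
  unfold scal, minus, plus, opp; simpl; unfold mult; simpl; field; auto.
- exact (ex_RInt_scal (V := R_CompleteNormedModule) _ _ _ _ Hfg).
Qed.

Lemma weighted_quotient_bound t j e N h : 0 <= t <= 1 -> 0 <= e -> h <> 0 ->
  Rabs N <= e * (t * Rabs h) -> Rabs (t ^ j * N / h) <= e.
Proof.
intros Ht He Hh HN.
assert (Hp : 0 <= Rabs (t ^ j) <= 1).
{ rewrite <- RPow_abs, Rabs_right by lra; split; [apply pow_le; lra|].
  rewrite <- (pow1 j); apply pow_incr; lra. }
assert (Hm : 0 < Rabs h) by (apply Rabs_pos_lt; exact Hh).
assert (HN' : Rabs N / Rabs h <= e * t)
  by (apply Rmult_le_reg_r with (Rabs h); [lra | unfold Rdiv; rewrite Rmult_assoc, Rinv_l; lra]).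
assert (0 <= Rabs N / Rabs h)
  by (apply Rmult_le_pos; [apply Rabs_pos | apply Rlt_le, Rinv_0_lt_compat; lra]).
unfold Rdiv in *; rewrite !Rabs_mult, Rabs_inv, Rmult_assoc; nra.
Qed.

Lemma segment_moment_left a b j K : a <= b -> segment_moment a b j K a = K a / INR (S j).
Proof.
intros Hab; unfold segment_moment; rewrite <- RInt_pow_mult.
apply RInt_ext; intros t _; rewrite clamp_id by lra; do 2 f_equal; ring.
Qed.

Section Hadamard.
Variables a b : R.
Hypothesis Hab : a < b.

Lemma has_deriv_on_uniform K K' : has_deriv_on a b K K' -> continuous_in a b K' ->
  forall eta, 0 < eta -> exists d, 0 < d /\ forall y z, a <= y <= b -> a <= z <= b ->
  Rabs (y - z) < d -> Rabs (K y - K z - K' z * (y - z)) <= eta * Rabs (y - z).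
Proof.
intros HK HK' eta Heta.
assert (UC := Heine (fun z => K' (clamp a b z)) (fun c => a <= c <= b) (compact_P3 a b)
  (fun x _ => proj2 (continuity_pt_filterlim _ _) (continuous_clamp a b K' ltac:(lra) HK' x))).
destruct (UC (mkposreal eta Heta)) as [d Hd]; exists d; split; [apply cond_pos|].
intros y z Hy Hz Hyz; simpl in Hd.
destruct (has_deriv_on_MVT_near a b K K' y z HK Hy Hz) as [c [Hc [Hcz E]]].
specialize (Hd c z Hc Hz ltac:(lra)); rewrite !clamp_id in Hd by lra; unfold R_dist in Hd.
replace (K y - K z - K' z * (y - z)) with ((K' c - K' z) * (y - z)) by lra.
rewrite Rabs_mult; apply Rmult_le_compat_r; [apply Rabs_pos | lra].
Qed.

Lemma has_deriv_on_segment_moment j K K' : has_deriv_on a b K K' -> continuous_in a b K' ->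
  has_deriv_on a b (segment_moment a b j K) (segment_moment a b (S j) K').
Proof.
intros HK HK' x0 Hx0; apply lim_in_eps; intros eps Heps.
assert (HKc := continuous_clamp a b K ltac:(lra) (has_deriv_on_continuous_in a b K K' HK)).
assert (HK'c := continuous_clamp a b K' ltac:(lra) HK').
destruct (has_deriv_on_uniform K K' HK HK' (eps / 2) ltac:(lra)) as [d [Hd HU]].
exists d; split; auto; intros y Hy Hyx Hyd.
assert (eK : forall x, ex_RInt (fun t => t ^ j * K (clamp a b (a + t * (x - a)))) 0 1)
  by (intros; apply (ex_RInt_moment (fun z => K (clamp a b z))); auto).
assert (eK' : forall x, ex_RInt (fun t => t ^ S j * K' (clamp a b (a + t * (x - a)))) 0 1)
  by (intros; apply (ex_RInt_moment (fun z => K' (clamp a b z))); auto).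
unfold segment_moment; rewrite RInt_diff_quotient by (auto; lra).
eapply Rle_lt_trans; [apply (abs_RInt_le_const _ 0 1 (eps / 2)) | lra];
  [lra | apply ex_RInt_diff_quotient; auto |].
intros t Ht.
assert (HY : a <= a + t * (y - a) <= b) by nra.
assert (HZ : a <= a + t * (x0 - a) <= b) by nra.
rewrite !clamp_id by assumption.
set (Y := a + t * (y - a)) in *; set (Z := a + t * (x0 - a)) in *.
assert (HYZ : Y - Z = t * (y - x0)) by (unfold Y, Z; ring).
assert (HYZd : Rabs (Y - Z) <= t * Rabs (y - x0))
  by (rewrite HYZ, Rabs_mult, (Rabs_right t) by lra; lra).
assert (Hm := Rabs_pos (y - x0)).
specialize (HU Y Z HY HZ ltac:(nra)).
replace ((t ^ j * K Y - t ^ j * K Z) / (y - x0) - t ^ S j * K' Z)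
  with (t ^ j * (K Y - K Z - K' Z * (Y - Z)) / (y - x0)) by (rewrite HYZ; simpl; field; lra).
apply weighted_quotient_bound; [lra | lra | lra | nra].
Qed.

Lemma has_deriv_on_same_deriv_eq f g f' : has_deriv_on a b f f' -> has_deriv_on a b g f' -> f a = g a ->
  forall x, a <= x <= b -> f x = g x.
Proof.
intros Hf Hg Ha x Hx.
destruct (Req_dec x a) as [->|Hxa]; auto.
destruct (has_deriv_on_MVT a b (fun y => f y - g y) (fun y => f' y - f' y) a x
  (has_deriv_on_minus a b _ _ _ _ Hf Hg) ltac:(lra) ltac:(lra) ltac:(lra)) as [c [_ Ec]].
lra.
Qed.

Lemma hadamard_repr F F' : has_deriv_on a b F F' -> continuous_in a b F' -> F a = 0 ->
  forall x, a <= x <= b -> F x = (x - a) * segment_moment a b 0 F' x.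
Proof.
intros HF HF' Ha x Hx.
set (f := fun s => F' (clamp a b s)).
assert (Hfc : forall y, continuous f y) by (apply continuous_clamp; auto; lra).
assert (Hex : forall u v, ex_RInt f u v)
  by (intros; apply (ex_RInt_continuous (V := R_CompleteNormedModule)); intros; apply Hfc).
assert (HI : has_deriv_on a b (fun y => RInt f a y) F').
{ apply (has_deriv_on_ext a b (fun y => RInt f a y) f);
    [reflexivity | intros; unfold f; rewrite clamp_id; auto |].
  apply has_deriv_on_of_derivable; intros y _; apply is_derive_Reals.
  apply (is_derive_RInt (V := R_CompleteNormedModule) f _ a y); [|apply Hfc].
  apply filter_forall; intros; apply (RInt_correct (V := R_CompleteNormedModule)); auto. }
rewrite (has_deriv_on_same_deriv_eq F (fun y => RInt f a y) F' HF HI)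
  by (auto; rewrite RInt_point, Ha; reflexivity).
unfold segment_moment.
transitivity (RInt (fun t => scal (x - a) (f ((x - a) * t + a))) 0 1).
- rewrite (RInt_comp_lin (V := R_CompleteNormedModule)); [f_equal; ring | apply Hex].
- rewrite (RInt_scal (V := R_CompleteNormedModule)).
  + apply (f_equal (Rmult (x - a))), RInt_ext; intros t _; unfold f; simpl.
    rewrite Rmult_1_l; do 2 f_equal; ring.
  + apply (ex_RInt_ext (fun t => t ^ 0 * f (a + t * (x - a)))); [intros t _; unfold f; simpl|].
    * rewrite Rmult_1_l; do 2 f_equal; ring.
    * apply ex_RInt_moment, Hfc.
Qed.

Lemma hadamard_division DF : deriv_seq_on a b DF -> DF 0%nat a = 0 ->
  exists DQ, deriv_seq_on a b DQ /\
    (forall x, a <= x <= b -> DF 0%nat x = (x - a) * DQ 0%nat x) /\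
    (forall j, DQ j a = DF (S j) a / INR (S j)).
Proof.
intros HD H0.
assert (Hc : forall j, continuous_in a b (DF j))
  by (intros j; apply (has_deriv_on_continuous_in a b _ (DF (S j))), HD).
exists (fun j => segment_moment a b j (DF (S j))); split; [|split].
- intros j; apply has_deriv_on_segment_moment; auto.
- apply hadamard_repr; auto.
- intros j; apply segment_moment_left; lra.
Qed.

Lemma hadamard_division_iter G r : deriv_seq_on a b G -> (forall j, (j <= r)%nat -> G j a = 0) ->
  forall i, (i <= S r)%nat -> exists DH, deriv_seq_on a b DH /\
    (forall x, a <= x <= b -> G 0%nat x = (x - a) ^ i * DH 0%nat x) /\
    (forall j, exists c, 0 < c /\ DH j a = c * G (i + j)%nat a).
Proof.
intros HG Ha i; induction i as [|i IH]; intros Hi.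
- exists G; split; [|split]; auto.
  + intros; simpl; ring.
  + intros j; exists 1; split; [lra | simpl; ring].
- destruct (IH ltac:(lia)) as [DH [HD [E Hc]]].
  destruct (Hc 0%nat) as [c0 [Hc0 E0]].
  assert (Z : DH 0%nat a = 0) by (rewrite E0, Nat.add_0_r, Ha by lia; ring).
  destruct (hadamard_division DH HD Z) as [DQ [HQ [EQ EQa]]].
  exists DQ; split; [|split]; auto.
  + intros x Hx; rewrite E, EQ by auto; simpl; ring.
  + intros j; destruct (Hc (S j)) as [c [Hc' Ec]]; exists (c / INR (S j)); split.
    * apply Rdiv_lt_0_compat; auto; apply lt_0_INR; lia.
    * rewrite EQa, Ec; replace (i + S j)%nat with (S i + j)%nat by lia; field; apply not_0_INR; lia.
Qed.

End Hadamard.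

Section Root.
Variables (a b : R) (r : nat) (G : nat -> R -> R).
Hypotheses (Hab : a < b) (HG : deriv_seq_on a b G) (Hga : forall j, (j <= r)%nat -> G j a = 0)
  (Hpos : forall y, a <= y <= b -> 0 < G (S r) y).

Lemma flat_derivs_pos j : (j <= S r)%nat -> forall x, a < x <= b -> 0 < G j x.
Proof.
intros Hj; replace j with (S r - (S r - j))%nat by lia.
generalize (S r - j)%nat (Nat.le_sub_l (S r) j); intros m; induction m as [|m IH]; intros Hm x Hx.
- rewrite Nat.sub_0_r; apply Hpos; lra.
- replace (S r - m)%nat with (S (S r - S m)) in IH by lia.
  apply (has_deriv_on_pos_from_zero a b _ (G (S (S r - S m)))); auto; [apply Hga; lia|].
  intros; apply IH; auto; lia.
Qed.

Lemma flat_quotient_pos : exists DH, deriv_seq_on a b DH /\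
  (forall x, a <= x <= b -> G 0%nat x = (x - a) ^ S r * DH 0%nat x) /\
  (forall x, a <= x <= b -> 0 < DH 0%nat x).
Proof.
destruct (hadamard_division_iter a b Hab G r HG Hga (S r) (le_n _)) as [DH [HD [E Hc]]].
destruct (Hc 0%nat) as [c [Hc0 Ec]]; rewrite Nat.add_0_r in Ec.
exists DH; split; [|split]; auto.
intros x Hx; destruct (Req_dec x a) as [->|Hxa].
- rewrite Ec; apply Rmult_lt_0_compat; [exact Hc0 | apply Hpos; lra].
- assert (G0 : 0 < G 0%nat x) by (apply flat_derivs_pos; [lia | lra]).
  rewrite E in G0 by auto.
  assert (P : 0 < (x - a) ^ S r) by (apply pow_lt; lra).
  destruct (Rle_lt_dec (DH 0%nat x) 0); auto; nra.
Qed.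

(* [u = (x - a) h^(1/(r+1))], where [G 0 = (x - a)^(r+1) h] with [h > 0]. *)
Lemma flat_root : exists DU, deriv_seq_on a b DU /\
  (forall x, a <= x <= b -> DU 0%nat x ^ S r = G 0%nat x) /\
  (forall x, a < x <= b -> 0 < DU 0%nat x) /\ DU 0%nat a = 0 /\ 0 < DU 1%nat a.
Proof.
destruct flat_quotient_pos as [DH [HD [E hpos]]]; set (h := DH 0%nat) in *.
assert (HSr : 0 < INR (S r)) by (apply lt_0_INR; lia).
set (w := fun x => Rpower (h x) (/ INR (S r))).
assert (Hw : smooth_on a b w) by (apply smooth_on_Rpower; auto; exists DH; split; auto).
destruct (smooth_on_mult a b _ _ (smooth_on_shift a b a) Hw) as [DU [HU0 HDU]].
destruct (smooth_on_deriv a b w Hw) as [w' [Dw _]].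
assert (Du : has_deriv_on a b (DU 0%nat) (fun x => 1 * w x + (x - a) * w' x)).
{ apply has_deriv_on_ext with (fun x => (x - a) * w x) (fun x => (1 - 0) * w x + (x - a) * w' x);
    [intros; symmetry; auto | intros; ring |].
  apply has_deriv_on_mult; auto.
  apply has_deriv_on_minus; [apply has_deriv_on_id | apply has_deriv_on_const]. }
exists DU; split; [|split; [|split; [|split]]]; auto.
- intros x Hx; rewrite HU0, Rpow_mult_distr, E by auto; f_equal; unfold w.
  rewrite <- Rpower_pow, Rpower_mult, Rinv_l by (try apply exp_pos; lra); apply Rpower_1; auto.
- intros x Hx; rewrite HU0 by lra; apply Rmult_lt_0_compat; [lra | apply exp_pos].
- rewrite HU0 by lra; ring.
- rewrite (has_deriv_on_unique a b (DU 0%nat) (DU 1%nat) _ a Hab ltac:(lra) (HDU 0%nat) Du).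
  replace (a - a) with 0 by ring; rewrite Rmult_0_l, Rplus_0_r, Rmult_1_l; apply exp_pos.
Qed.

Lemma smooth_root : exists DU, deriv_seq_on a b DU /\
  (forall x, a <= x <= b -> DU 0%nat x ^ S r = G 0%nat x) /\
  (forall x, a <= x <= b -> G 1%nat x = INR (S r) * DU 0%nat x ^ r * DU 1%nat x) /\
  DU 0%nat a = 0 /\ (forall x, a <= x <= b -> 0 < DU 1%nat x).
Proof.
destruct flat_root as [DU [HDU [E0 [Upos [Ua U1a]]]]].
assert (E1 : forall x, a <= x <= b -> G 1%nat x = INR (S r) * DU 0%nat x ^ r * DU 1%nat x).
{ intros x Hx; apply (has_deriv_on_unique a b (G 0%nat) _
    (fun y => INR (S r) * DU 0%nat y ^ r * DU 1%nat y) x Hab Hx (HG 0%nat)).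
  apply (has_deriv_on_ext a b (fun y => DU 0%nat y ^ S r)
    (fun y => INR (S r) * DU 0%nat y ^ pred (S r) * DU 1%nat y));
    [intros; apply E0; auto | reflexivity | apply has_deriv_on_pow, HDU]. }
exists DU; split; [|split; [|split; [|split]]]; auto.
intros x Hx; destruct (Req_dec x a) as [->|Hxa]; auto.
assert (G1 : 0 < G 1%nat x) by (apply flat_derivs_pos; [lia | lra]).
rewrite E1 in G1 by auto.
assert (0 < INR (S r) * DU 0%nat x ^ r)
  by (apply Rmult_lt_0_compat; [apply lt_0_INR; lia | apply pow_lt, Upos; lra]).
destruct (Rle_lt_dec (DU 1%nat x) 0); auto; nra.
Qed.

End Root.

Section VanishingOrder.
Variables a b : R.
Hypothesis Hab : a < b.

Lemma flat_bound m D x0 : deriv_seq_on a b D -> a <= x0 <= b -> (forall j, (j <= m)%nat -> D j x0 = 0) ->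
  forall eps, 0 < eps -> exists d, 0 < d /\ forall x, a <= x <= b -> Rabs (x - x0) < d ->
  Rabs (D 0%nat x) <= eps * Rabs (x - x0) ^ m.
Proof.
revert D; induction m as [|m IH]; intros D HD Hx0 HZ eps Heps.
- destruct (proj1 (lim_in_eps a b _ _ _) (has_deriv_on_continuous_in a b _ _ (HD 0%nat) x0 Hx0) eps Heps)
    as [d [Hd H]].
  exists d; split; auto; intros x Hx Hxd; simpl; rewrite Rmult_1_r.
  rewrite HZ in H by lia; destruct (Req_dec x x0) as [->|E].
  + rewrite HZ by lia; rewrite Rabs_R0; lra.
  + specialize (H x Hx E Hxd); rewrite Rminus_0_r in H; lra.
- destruct (IH (fun j => D (S j)) (fun j => HD (S j)) Hx0 (fun j Hj => HZ (S j) ltac:(lia)) eps Heps)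
    as [d [Hd H]].
  exists d; split; auto; intros x Hx Hxd.
  destruct (has_deriv_on_MVT_near a b _ _ x x0 (HD 0%nat) Hx Hx0) as [c [Hc [Hcx E]]].
  rewrite HZ in E by lia; rewrite Rminus_0_r in E; rewrite E, Rabs_mult.
  specialize (H c Hc ltac:(lra)).
  assert (Rabs (c - x0) ^ m <= Rabs (x - x0) ^ m) by (apply pow_incr; split; [apply Rabs_pos | auto]).
  assert (0 <= Rabs (x - x0)) by apply Rabs_pos.
  apply Rle_trans with (eps * Rabs (c - x0) ^ m * Rabs (x - x0)); [apply Rmult_le_compat_r; auto|].
  simpl; rewrite (Rmult_comm (Rabs (x - x0))), <- Rmult_assoc.
  apply Rmult_le_compat_r; [auto | apply Rmult_le_compat_l; lra].
Qed.

(* [D 0] vanishes at [x0] to order exactly [s]: it is bounded below by a multiple of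
   [|x - x0|^s], while [m > s] vanishing derivatives would make it [o(|x - x0|^s)]. *)
Lemma vanishing_order_le (D : nat -> R -> R) (V u : R -> R) (x0 u1 : R) (s m : nat) :
  a <= x0 <= b -> deriv_seq_on a b D ->
  (forall j, (j < m)%nat -> D j x0 = 0) ->
  filterlim V (at_in a b x0) (locally (V x0)) -> V x0 <> 0 ->
  filterlim (fun x => (u x - u x0) / (x - x0)) (at_in a b x0) (locally u1) -> u1 <> 0 ->
  (forall x, a <= x <= b -> D 0%nat x = V x * (u x - u x0) ^ s) -> (m <= s)%nat.
Proof.
intros Hx0 HD HZ HV HV0 Hu Hu1 E.
destruct (Compare_dec.le_lt_dec m s) as [|Hlt]; auto; exfalso.
assert (Hv : 0 < Rabs (V x0)) by (apply Rabs_pos_lt; auto).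
assert (Hw : 0 < Rabs u1) by (apply Rabs_pos_lt; auto).
set (kap := Rabs (V x0) / 2 * (Rabs u1 / 2) ^ s).
assert (Hkap : 0 < kap) by (unfold kap; apply Rmult_lt_0_compat; [|apply pow_lt]; lra).
destruct (flat_bound s D x0 HD Hx0 (fun j Hj => HZ j ltac:(lia)) (kap / 2) ltac:(lra)) as [d [Hd Hflat]].
assert (NV := lim_at_in_near a b _ _ _ (Rabs (V x0) / 2) ltac:(lra) HV).
assert (Nu := lim_at_in_near a b _ _ _ (Rabs u1 / 2) ltac:(lra) Hu).
assert (Nd := lim_at_in_near a b _ _ _ d Hd (lim_in_id a b x0)).
destruct (at_in_ex a b x0 _ Hab Hx0 (filter_and _ _ NV (filter_and _ _ Nu Nd)))
  as [x [[Hx Hxx0] [HVx [Hux Hxd]]]].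
specialize (Hflat x Hx Hxd); rewrite E, Rabs_mult, <- RPow_abs in Hflat by auto.
assert (Hxp : 0 < Rabs (x - x0)) by (apply Rabs_pos_lt; lra).
assert (AV : Rabs (V x0) / 2 <= Rabs (V x)).
{ pose proof (Rabs_triang_inv (V x0) (V x)) as T; rewrite Rabs_minus_sym in T; lra. }
assert (AU : Rabs u1 / 2 * Rabs (x - x0) <= Rabs (u x - u x0)).
{ replace (u x - u x0) with ((u x - u x0) / (x - x0) * (x - x0)) by (field; lra).
  rewrite Rabs_mult; apply Rmult_le_compat_r; [lra|].
  pose proof (Rabs_triang_inv u1 ((u x - u x0) / (x - x0))) as T; rewrite Rabs_minus_sym in T; lra. }
assert (P1 : (Rabs u1 / 2 * Rabs (x - x0)) ^ s <= Rabs (u x - u x0) ^ s)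
  by (apply pow_incr; split; [apply Rmult_le_pos|]; lra).
rewrite Rpow_mult_distr in P1.
assert (Px : 0 < Rabs (x - x0) ^ s) by (apply pow_lt; auto).
assert (Pu : 0 <= (Rabs u1 / 2) ^ s) by (apply pow_le; lra).
assert (kap * Rabs (x - x0) ^ s <= Rabs (V x) * Rabs (u x - u x0) ^ s).
{ unfold kap; rewrite Rmult_assoc; apply Rmult_le_compat; try lra.
  apply Rmult_le_pos; lra. }
nra.
Qed.

End VanishingOrder.

Definition poly_fun (n : nat) (c : nat -> R) (y : R) := lsum n (fun k => c k * y ^ k).

Definition poly_fun_root_order (n : nat) (c : nat -> R) (y0 : R) (mu : nat) :=
  exists Q : R -> R, continuity_pt Q y0 /\ Q y0 <> 0 /\
    forall y, poly_fun n c y = Q y * (y - y0) ^ mu.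

Module PolyRoots.
Import ssreflect ssrbool eqtype ssrnat seq fintype bigop ssralg poly polydiv Rstruct.
Import GRing.Theory.
Local Open Scope ring_scope.

Definition root_mult (n : nat) (c : nat -> R) (y : R) : nat := mup y (\poly_(i < n) c i).

Lemma lsum_big n (F : nat -> R) : lsum n F = \sum_(i < n) F i.
Proof. by elim: n => [|n IH]; rewrite ?big_ord0 // big_ord_recr /= IH. Qed.

Lemma poly_fun_horner (n : nat) (c : nat -> R) (y : R) : poly_fun n c y = (\poly_(i < n) c i).[y].
Proof. by rewrite horner_poly /poly_fun lsum_big; apply: eq_bigr => i _; rewrite RpowE. Qed.

Lemma horner_continuity (p : {poly R}) y : continuity_pt (fun x => p.[x]) y.
Proof.
elim/poly_ind: p y => [|p c IH] y.
- apply: (continuity_pt_ext (fun _ => 0%R)); first by move=> x; rewrite horner0.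
  exact: continuity_pt_const.
- apply: (continuity_pt_ext (fun x => Rplus (Rmult p.[x] x) c)); first by move=> x; rewrite hornerMXaddC.
  apply: continuity_pt_plus; last exact: continuity_pt_const.
  apply: (continuity_pt_mult (fun x => p.[x]) (fun x => x)); first exact: IH.
  exact: derivable_continuous_pt (derivable_pt_id y).
Qed.

Lemma poly_fun_neq0 (n : nat) (c : nat -> R) (k : nat) :
  (k < n)%coq_nat -> c k <> 0 -> \poly_(i < n) c i != 0.
Proof.
move=> /ltP Hk Hck; apply/eqP => E; apply: Hck.
by have := coef_poly n c k; rewrite E coef0 Hk.
Qed.

Lemma sum_mup_lt (F : fieldType) (l : seq F) (p : {poly F}) : p != 0 -> uniq l ->
  (sumn (map (fun y => mup y p) l) < size p)%N.
Proof.
elim: l p => [|y l IH] p Hp /=; first by rewrite size_poly_gt0.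
move=> /andP [Hy Hl].
have [m [q Hq Ep]] := multiplicity_XsubC p y.
rewrite Hp /= in Hq.
have qN0 : q != 0 by apply: contraNneq Hp => q0; rewrite Ep q0 mul0r.
have Xm0 : ('X - y%:P) ^+ m != 0 by rewrite expf_neq0 // polyXsubC_eq0.
have -> : mup y p = m by rewrite Ep mupMr // mup_XsubCX eqxx.
have -> : map (fun z => mup z p) l = map (fun z => mup z q) l.
  apply/eq_in_map => z Hz; rewrite Ep mupM // mup_XsubCX.
  have -> : (y == z) = false by apply/eqP => E; rewrite E Hz in Hy.
  by rewrite addn0.
have -> : size p = (size q + m)%N.
  by rewrite Ep size_Mmonic ?monic_exp ?monicXsubC // size_exp_XsubC addnS.
by rewrite [(m + _)%N]addnC ltn_add2r; exact: IH.
Qed.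

Lemma NoDup_uniq (T : eqType) (l : seq T) : List.NoDup l -> uniq l.
Proof.
elim=> [|x l0 Hx _ IH] //=; rewrite IH andbT; apply/negP => H; apply: Hx.
by elim: l0 H {IH} => //= z l0 IHl; rewrite in_cons => /orP [/eqP ->|/IHl]; [left | right].
Qed.

Lemma poly_fun_root_order_root_mult (n : nat) (c : nat -> R) (y0 : R) :
  (exists k, (k < n)%coq_nat /\ c k <> 0) -> poly_fun_root_order n c y0 (root_mult n c y0).
Proof.
move=> [k [Hk Hck]]; have HP := poly_fun_neq0 _ _ _ Hk Hck.
have [m [q Hq EP]] := multiplicity_XsubC (\poly_(i < n) c i) y0.
rewrite HP /= in Hq.
exists (fun y => q.[y]); split; first exact: horner_continuity.
split; first by move=> E; move: Hq; rewrite /root E eqxx.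
have -> : root_mult n c y0 = m by rewrite /root_mult EP mupMr // mup_XsubCX eqxx.
by move=> y; rewrite poly_fun_horner EP hornerM horner_exp hornerXsubC RpowE.
Qed.

Lemma root_mult_sum (n : nat) (c : nat -> R) (l : list R) :
  (exists k, (k < n)%coq_nat /\ c k <> 0) -> List.NoDup l ->
  (List.list_sum (List.map (root_mult n c) l) <= n - 1)%coq_nat.
Proof.
move=> [k [Hk Hck]] Hl; have HP := poly_fun_neq0 _ _ _ Hk Hck.
have Hsum : List.list_sum (List.map (root_mult n c) l) = sumn (map (root_mult n c) l)
  by elim: l {Hl} => //= x l ->.
have H1 := sum_mup_lt _ _ _ HP (NoDup_uniq _ _ Hl).
have H2 : (size (\poly_(i < n) c i) <= n)%N by apply: size_poly.
move/ltP: Hk => Hk; rewrite Hsum; apply/leP; rewrite subn1 -ltnS (ltn_predK Hk).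
exact: leq_trans H1 H2.
Qed.

End PolyRoots.

Definition ext_chebyshev_basis (a b : R) (n : nat) (phi : nat -> R -> R) : Prop :=
  exists D : nat -> nat -> R -> R,
    (forall k, (k < n)%nat ->
       (forall x, a <= x <= b -> D k 0%nat x = phi k x) /\ deriv_seq_on a b (D k)) /\
    (forall c : nat -> R,
       (forall x, a <= x <= b -> lsum n (fun k => c k * phi k x) = 0) ->
       forall k, (k < n)%nat -> c k = 0) /\
    (forall c : nat -> R,
       (exists x, a <= x <= b /\ lsum n (fun k => c k * phi k x) <> 0) ->
       forall l : list (R * nat),
         NoDup (map fst l) ->
         (forall p, In p l ->
            a <= fst p <= b /\
            forall j, (j < snd p)%nat -> lsum n (fun k => c k * D k j (fst p)) = 0) ->
         (list_sum (map snd l) <= n - 1)%nat).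

Lemma lsum_ext n F G : (forall k, (k < n)%nat -> F k = G k) -> lsum n F = lsum n G.
Proof. induction n as [|n IH]; intros H; simpl; auto; rewrite IH, H; auto. Qed.

Lemma lsum_mult_l n A F : lsum n (fun k => A * F k) = A * lsum n F.
Proof. induction n as [|n IH]; simpl; [ring | rewrite IH; ring]. Qed.

Lemma lsum_nonzero n (F : nat -> R) : lsum n F <> 0 -> exists k, (k < n)%nat /\ F k <> 0.
Proof.
induction n as [|n IH]; simpl; [lra|]; intros H.
destruct (Req_dec (F n) 0) as [E|E]; [|exists n; split; auto].
destruct IH as [k [Hk Fk]]; [lra | exists k; split; auto].
Qed.

Lemma list_sum_map_le {A} (l : list A) (f g : A -> nat) : (forall p, In p l -> (f p <= g p)%nat) ->
  (list_sum (map f l) <= list_sum (map g l))%nat.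
Proof.
induction l as [|p l IH]; intros H; simpl; auto.
specialize (IH (fun q Hq => H q (or_intror Hq))); specialize (H p (or_introl eq_refl)); lia.
Qed.

Lemma has_deriv_on_lsum a b n (c : nat -> R) (f f' : nat -> R -> R) :
  (forall k, (k < n)%nat -> has_deriv_on a b (f k) (f' k)) ->
  has_deriv_on a b (fun x => lsum n (fun k => c k * f k x)) (fun x => lsum n (fun k => c k * f' k x)).
Proof.
induction n as [|n IH]; intros H; simpl; [apply has_deriv_on_const|].
apply has_deriv_on_plus; [apply IH; auto | apply has_deriv_on_scal; auto].
Qed.

Section WeightedPowers.
Variables (a b : R) (n : nat) (W U : nat -> R -> R).
Hypotheses (Hab : a < b) (HW : deriv_seq_on a b W) (HU : deriv_seq_on a b U)
  (HW0 : forall x, a <= x <= b -> W 0%nat x <> 0) (HU1 : forall x, a <= x <= b -> 0 < U 1%nat x).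

Let psi k x := W 0%nat x * U 0%nat x ^ k.

Lemma weighted_power_smooth : exists D, forall k,
  (forall x, a <= x <= b -> D k 0%nat x = psi k x) /\ deriv_seq_on a b (D k).
Proof.
apply (choice (fun k Dk => (forall x, a <= x <= b -> Dk 0%nat x = psi k x) /\ deriv_seq_on a b Dk)).
intros k; apply (smooth_on_mult a b (W 0%nat) (fun x => U 0%nat x ^ k));
  [exists W | apply smooth_on_pow; exists U]; split; auto.
Qed.

Section Zeros.
Variables (D : nat -> nat -> R -> R) (c : nat -> R).
Hypotheses (HD : forall k, (k < n)%nat ->
              (forall x, a <= x <= b -> D k 0%nat x = psi k x) /\ deriv_seq_on a b (D k))
  (Hc : exists k, (k < n)%nat /\ c k <> 0).

Let v j x := lsum n (fun k => c k * D k j x).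

Lemma weighted_power_zero_mult x0 m : a <= x0 <= b -> (forall j, (j < m)%nat -> v j x0 = 0) ->
  (m <= PolyRoots.root_mult n c (U 0%nat x0))%nat.
Proof.
intros Hx0 HZ.
destruct (PolyRoots.poly_fun_root_order_root_mult n c (U 0%nat x0) Hc) as [Q [HQ [HQ0 EQ]]].
apply (vanishing_order_le a b Hab v (fun x => W 0%nat x * Q (U 0%nat x)) (U 0%nat) x0 (U 1%nat x0)
  _ m Hx0).
- intros j; apply has_deriv_on_lsum; intros k Hk; apply (proj2 (HD k Hk)).
- exact HZ.
- apply lim_mult; [|apply lim_in_comp; auto].
  + apply (has_deriv_on_continuous_in a b _ (W 1%nat)); auto.
  + apply (has_deriv_on_continuous_in a b _ (U 1%nat)); auto.
- apply Rmult_integral_contrapositive_currified; auto.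
- apply HU, Hx0.
- pose proof (HU1 x0 Hx0); lra.
- intros x Hx; unfold v; rewrite (lsum_ext n _ (fun k => W 0%nat x * (c k * U 0%nat x ^ k))).
  + rewrite lsum_mult_l; fold (poly_fun n c (U 0%nat x)); rewrite EQ; ring.
  + intros k Hk; rewrite (proj1 (HD k Hk)) by auto; unfold psi; ring.
Qed.

Lemma weighted_power_zero_count l : NoDup (map fst l) ->
  (forall p, In p l -> a <= fst p <= b /\ forall j, (j < snd p)%nat -> v j (fst p) = 0) ->
  (list_sum (map snd l) <= n - 1)%nat.
Proof.
intros Hl Hzeros.
apply Nat.le_trans with (list_sum (map (PolyRoots.root_mult n c) (map (U 0%nat) (map fst l)))).
- rewrite !map_map; apply list_sum_map_le; intros p Hp.
  destruct (Hzeros p Hp) as [Hpi Hz]; apply weighted_power_zero_mult; auto.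
- apply PolyRoots.root_mult_sum; auto.
  apply NoDup_map_NoDup_ForallPairs; auto; intros x y Hx Hy.
  apply in_map_iff in Hx as [p [<- Hp]]; apply in_map_iff in Hy as [q [<- Hq]].
  apply (has_deriv_on_pos_injective a b _ (U 1%nat) (HU 0%nat) HU1);
    [apply (Hzeros p Hp) | apply (Hzeros q Hq)].
Qed.

End Zeros.

Lemma weighted_power_independent D c :
  (forall k, (k < n)%nat ->
     (forall x, a <= x <= b -> D k 0%nat x = psi k x) /\ deriv_seq_on a b (D k)) ->
  (forall x, a <= x <= b -> lsum n (fun k => c k * D k 0%nat x) = 0) ->
  forall k, (k < n)%nat -> c k = 0.
Proof.
intros HD Hc k Hk; destruct (Req_dec (c k) 0) as [|Hck]; auto; exfalso.
assert (Z := deriv_seq_on_zero a b (fun j x => lsum n (fun k => c k * D k j x)) Hab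
  (fun j => has_deriv_on_lsum a b n c _ _ (fun k Hk => proj2 (HD k Hk) j)) Hc).
assert (H := weighted_power_zero_count D c HD (ex_intro _ k (conj Hk Hck)) ((a, n) :: nil)).
enough (list_sum (map snd ((a, n) :: nil)) <= n - 1)%nat by (simpl in *; lia).
apply H; [constructor; [intros [] | constructor] |].
intros p [<-|[]]; split; [simpl; lra | intros j _; apply Z; simpl; lra].
Qed.

Lemma weighted_power_ext_chebyshev (phi : nat -> R -> R) :
  (forall k x, a <= x <= b -> phi k x = psi k x) -> ext_chebyshev_basis a b n phi.
Proof.
intros Hphi; destruct weighted_power_smooth as [D HD].
assert (HD' : forall k, (k < n)%nat ->
  (forall x, a <= x <= b -> D k 0%nat x = psi k x) /\ deriv_seq_on a b (D k)) by auto.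
assert (Hv : forall c x, a <= x <= b ->
  lsum n (fun k => c k * phi k x) = lsum n (fun k => c k * D k 0%nat x))
  by (intros c x Hx; apply lsum_ext; intros k _; rewrite (proj1 (HD k)), Hphi; auto).
exists D; split; [|split].
- intros k _; split; [intros x Hx; rewrite (proj1 (HD k)), Hphi|]; auto; apply HD.
- intros c Hc; apply (weighted_power_independent D c HD'); intros x Hx; rewrite <- Hv; auto.
- intros c [x [Hx Hvx]] l Hl Hzeros.
  rewrite Hv in Hvx by auto; apply lsum_nonzero in Hvx as [k [Hk Hck]].
  apply (weighted_power_zero_count D c HD'); auto.
  exists k; split; auto; intros E; apply Hck; rewrite E; ring.
Qed.

End WeightedPowers.

Lemma Rpower_root_pow u r k : 0 < u ->
  u ^ r * Rpower (u ^ S r) ((INR k - INR r) / (INR r + 1)) = u ^ k.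
Proof.
intros Hu; assert (0 <= INR r) by apply pos_INR.
rewrite <- !Rpower_pow, Rpower_mult, <- Rpower_plus by exact Hu; f_equal.
rewrite S_INR; field; lra.
Qed.

Lemma right_lim_eq a b (f g : R -> R) (L : R) : a < b -> (forall y, a < y <= b -> f y = g y) ->
  filterlim f (at_right a) (locally L) -> filterlim g (at_in a b a) (locally (g a)) -> L = g a.
Proof.
intros Hab E Hf Hg.
assert (Hdom : forall y, a <= y <= b /\ y <> a -> a < y <= b)
  by (intros y [[[Hy|Hy] Hyb] Hya]; [lra | congruence]).
apply (lim_in_unique a b g a L (g a) Hab ltac:(lra)); [|exact Hg].
apply (filterlim_within_ext _ f); [intros y Hy; apply E, Hdom, Hy|].
apply (filterlim_filter_le_1 (F := at_right a)); [|exact Hf].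
intros P HP; apply (filter_imp _ _ (fun y H Hy => H (proj1 (Hdom y Hy))) HP).
Qed.

Section Identification.
Variables (a b : R) (r : nat) (g : R -> R) (G : nat -> R -> R) (phi : nat -> R -> R) (sg : R).
Hypotheses (Hab : a < b) (Hsg : sg * sg = 1)
  (HG0 : forall x, a <= x <= b -> G 0%nat x = g x) (HG : deriv_seq_on a b G)
  (Hga : forall j, (j <= r)%nat -> G j a = 0)
  (Hsign : forall y, a <= y <= b -> 0 < sg * G (S r) y)
  (Hphi : forall k x, a < x <= b ->
     phi k x = G 1%nat x * Rpower (sg * g x) ((INR k - INR r) / (INR r + 1)))
  (Hphia : forall k, filterlim (phi k) (at_right a) (locally (phi k a))).

(* With [sg g = u^(r+1)], [phi k = sg (r+1) u' u^k]. *)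
Lemma phi_weighted_power : exists W U : nat -> R -> R,
  deriv_seq_on a b W /\ deriv_seq_on a b U /\
  (forall x, a <= x <= b -> W 0%nat x <> 0) /\ (forall x, a <= x <= b -> 0 < U 1%nat x) /\
  (forall k x, a <= x <= b -> phi k x = W 0%nat x * U 0%nat x ^ k).
Proof.
destruct (smooth_root a b r (fun j x => sg * G j x) Hab) as [U [HU [E0 [E1 [Ua HU1]]]]].
- intros j; apply has_deriv_on_scal, HG.
- intros j Hj; rewrite Hga by exact Hj; ring.
- exact Hsign.
- set (W := fun j x => sg * INR (S r) * U (S j) x).
  assert (HW : deriv_seq_on a b W) by (intros j; apply has_deriv_on_scal, HU).
  assert (HSr : 0 < INR (S r)) by (apply lt_0_INR; lia).
  assert (Upos : forall x, a < x <= b -> 0 < U 0%nat x)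
    by (apply (has_deriv_on_pos_from_zero a b _ (U 1%nat)); auto; intros; apply HU1; lra).
  assert (Eab : forall k x, a < x <= b -> phi k x = W 0%nat x * U 0%nat x ^ k).
  { intros k x Hx; rewrite Hphi, <- HG0, <- E0 by (auto; lra).
    replace (G 1%nat x) with (sg * (sg * G 1%nat x)) by (rewrite <- Rmult_assoc, Hsg; ring).
    rewrite E1 by lra; unfold W; rewrite <- (Rpower_root_pow (U 0%nat x) r k) by (apply Upos; auto).
    ring. }
  exists W, U; split; [|split; [|split; [|split]]]; auto.
  + intros x Hx; unfold W; pose proof (HU1 x Hx).
    assert (sg <> 0) by (intros ->; lra).
    apply Rmult_integral_contrapositive_currified; [apply Rmult_integral_contrapositive_currified|]; lra.
  + intros k x Hx; destruct (Req_dec x a) as [->|Hxa]; [|apply Eab; lra].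
    apply (right_lim_eq a b (phi k) (fun y => W 0%nat y * U 0%nat y ^ k)); auto.
    apply lim_mult; [apply (has_deriv_on_continuous_in a b _ (W 1%nat)); auto; lra|].
    apply (has_deriv_on_continuous_in a b (fun y => U 0%nat y ^ k)
      (fun y => INR k * U 0%nat y ^ pred k * U 1%nat y));
      [apply has_deriv_on_pow, HU | lra].
Qed.

End Identification.

Lemma sign_normalization a b r (g : R -> R) (G : nat -> R -> R) (phi : nat -> R -> R) :
  a < b -> deriv_seq_on a b G -> (forall x, a <= x <= b -> G (S r) x <> 0) ->
  (forall k x, a < x <= b ->
     ((forall y, a <= y <= b -> 0 < G (S r) y) ->
        phi k x = G 1%nat x * Rpower (g x) ((INR k - INR r) / (INR r + 1))) /\
     ((forall y, a <= y <= b -> G (S r) y < 0) ->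
        phi k x = G 1%nat x * Rpower (- g x) ((INR k - INR r) / (INR r + 1)))) ->
  exists sg, sg * sg = 1 /\ (forall y, a <= y <= b -> 0 < sg * G (S r) y) /\
    forall k x, a < x <= b -> phi k x = G 1%nat x * Rpower (sg * g x) ((INR k - INR r) / (INR r + 1)).
Proof.
intros Hab HG Hgr Hphi.
assert (HGr : continuous_in a b (G (S r))) by apply (has_deriv_on_continuous_in a b _ _ (HG (S r))).
destruct (continuous_in_sign a b (G (S r)) Hab HGr Hgr) as [Hs|Hs]; [exists 1 | exists (-1)];
  (split; [ring | split; [intros y Hy; specialize (Hs y Hy); lra | intros k x Hx]]).
- rewrite Rmult_1_l; apply (Hphi k x Hx), Hs.
- replace (-1 * g x) with (- g x) by ring; apply (Hphi k x Hx), Hs.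
Qed.

Theorem lemma3p6
  (a b : R) (r n : nat) (g : R -> R) (G : nat -> R -> R)
  (phi : nat -> R -> R)
  (Hab : a < b) (Hr : (1 <= r)%nat) (Hn : (1 <= n)%nat)
  (* g is C^infinity on [a,b], with successive derivatives G j *)
  (HG0 : forall x, a <= x <= b -> G 0%nat x = g x)
  (HG : deriv_seq_on a b G)
  (* g(a) = 0 and g^(j)(a) = 0 for j = 1..r *)
  (Hga : forall j, (j <= r)%nat -> G j a = 0)
  (* g^(r+1) does not vanish on [a,b] *)
  (Hgr : forall x, a <= x <= b -> G (S r) x <> 0)
  (* definition of phi_k on (a,b] in the two sign cases *)
  (Hphi : forall k x, a < x <= b ->
     ((forall y, a <= y <= b -> 0 < G (S r) y) ->
        phi k x = G 1%nat x * Rpower (g x) ((INR k - INR r) / (INR r + 1))) /\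
     ((forall y, a <= y <= b -> G (S r) y < 0) ->
        phi k x = G 1%nat x * Rpower (- g x) ((INR k - INR r) / (INR r + 1))))
  (* value at a by continuous extension *)
  (Hphia : forall k, filterlim (phi k) (at_right a) (locally (phi k a))) :
  exists D : nat -> nat -> R -> R,
    (* each phi_k (k < n) is C^infinity on [a,b], with derivatives D k j *)
    (forall k, (k < n)%nat ->
       (forall x, a <= x <= b -> D k 0%nat x = phi k x) /\ deriv_seq_on a b (D k)) /\
    (* the space spanned by phi_0..phi_{n-1} is n-dimensional *)
    (forall c : nat -> R,
       (forall x, a <= x <= b -> lsum n (fun k => c k * phi k x) = 0) ->
       forall k, (k < n)%nat -> c k = 0) /\
    (* every nonzero element has at most n-1 zeros in [a,b], counted with multiplicity *)
    (forall c : nat -> R,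
       (exists x, a <= x <= b /\ lsum n (fun k => c k * phi k x) <> 0) ->
       forall l : list (R * nat),
         NoDup (map fst l) ->
         (forall p, In p l ->
            a <= fst p <= b /\
            forall j, (j < snd p)%nat -> lsum n (fun k => c k * D k j (fst p)) = 0) ->
         (list_sum (map snd l) <= n - 1)%nat).
Proof.
change (ext_chebyshev_basis a b n phi).
destruct (sign_normalization a b r g G phi Hab HG Hgr Hphi) as [sg [Hsg [Hsign Hphi']]].
destruct (phi_weighted_power a b r g G phi sg Hab Hsg HG0 HG Hga Hsign Hphi' Hphia)
  as [W [U [HW [HU [HW0 [HU1 E]]]]]].
exact (weighted_power_ext_chebyshev a b n W U Hab HW HU HW0 HU1 phi E).
Qed.
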